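(* Let $G$ be a connected graph. If some graph equimorphic to $G$ is not connected, then there are infinitely many pairwise non-isomorphic graphs equimorphic to $G$.
   Context: Graphs are undirected and loopless. $G$ embeds into $G'$ if $G$ is isomorphic to an induced subgraph of $G'$; $G,G'$ are equimorphic if each embeds into the other. *)

From Stdlib Require Import Relations.

Record graph : Type := Graph {
  vert : Type;
  adj : vert -> vert -> Prop;
  adj_sym : forall x y, adj x y -> adj y x;
  adj_irrefl : forall x, ~ adj x x
}.

Definition embeds (G H : graph) : Prop :=
  exists f : vert G -> vert H,
    (forall x y, f x = f y -> x = y) /\
    (forall x y, adj G x y <-> adj H (f x) (f y)).

Definition equimorphic (G H : graph) : Prop := embeds G H /\ embeds H G.

Definition isomorphic (G H : graph) : Prop :=
  exists (f : vert G -> vert H) (g : vert H -> vert G),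
    (forall x, g (f x) = x) /\ (forall y, f (g y) = y) /\
    (forall x y, adj G x y <-> adj H (f x) (f y)).

Definition connected (G : graph) : Prop :=
  inhabited (vert G) /\
  forall x y : vert G, clos_refl_trans (vert G) (adj G) x y.

From Stdlib Require Import Relations Classical.
From mathcomp Require Import all_boot.

Set Implicit Arguments.
Unset Strict Implicit.
Unset Printing Implicit Defensive.

(* Let e : G -> H and h : H -> G be the embeddings, so f := e \o h is a
   self-embedding of H whose image lies in the component R of H containing
   e G. Pick d outside R. For k < j we have f^j x = f^k (f^(j-k) x) with
   f^(j-k) x in R, so f^j x and f^k d are distinct and non-adjacent. Hence
   f^m (e G) together with d, f d, ..., f^(m-1) d is an induced copy of G
   plus m isolated vertices inside H, and this graph F_m is equimorphic to G.
   As G is connected, F_m has exactly m isolated vertices unless G is a single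
   vertex, in which case it has m + 1; either way the F_m are pairwise
   non-isomorphic. *)

Definition is_embedding (A B : graph) (f : vert A -> vert B) : Prop :=
  injective f /\ forall x y, adj A x y <-> adj B (f x) (f y).

Lemma is_embedding_comp (A B C : graph) (f : vert A -> vert B) (g : vert B -> vert C) :
  is_embedding f -> is_embedding g -> is_embedding (g \o f).
Proof.
move=> [f_inj f_adj] [g_inj g_adj]; split; first exact: inj_comp.
by move=> x y; rewrite f_adj g_adj.
Qed.

Lemma is_embedding_iter (A : graph) (f : vert A -> vert A) n :
  is_embedding f -> is_embedding (iter n f).
Proof.
move=> f_emb; elim: n => [|n IHn]; first by split.
exact: (is_embedding_comp IHn f_emb).
Qed.

Lemma embeds_trans (A B C : graph) : embeds A B -> embeds B C -> embeds A C.
Proof. by move=> [f f_emb] [g g_emb]; exists (g \o f); apply: is_embedding_comp. Qed.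

Definition reach (A : graph) (x y : vert A) : Prop := clos_refl_trans (vert A) (adj A) x y.

Lemma reach_sym (A : graph) (x y : vert A) : reach x y -> reach y x.
Proof.
elim=> [u v /adj_sym uv | u | u v w _ vu _ wv]; first exact: rt_step.
- exact: rt_refl.
- exact: rt_trans wv vu.
Qed.

Lemma reach_hom (A B : graph) (f : vert A -> vert B) :
  (forall x y, adj A x y -> adj B (f x) (f y)) ->
  forall x y : vert A, reach x y -> reach (f x) (f y).
Proof.
move=> f_adj x y; elim=> [u v /f_adj uv | u | u v w _ uv _ vw]; first exact: rt_step.
- exact: rt_refl.
- exact: rt_trans uv vw.
Qed.

Lemma not_connected_unreachable (A : graph) (v : vert A) :
  ~ connected A -> exists d, ~ reach v d.
Proof.
move=> not_conn; apply: NNPP => all_reach; apply: not_conn; split; first by [].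
move=> x y; apply: (rt_trans _ _ _ v); [apply: reach_sym|]; apply: NNPP; eauto.
Qed.

Definition add_isolated_adj (G : graph) (m : nat) (u v : vert G + 'I_m) : Prop :=
  if (u, v) is (inl a, inl b) then adj G a b else False.

Lemma add_isolated_adj_sym (G : graph) m (u v : vert G + 'I_m) :
  add_isolated_adj u v -> add_isolated_adj v u.
Proof. by case: u v => [a|a] [b|b] //=; apply: adj_sym. Qed.

Lemma add_isolated_adj_irrefl (G : graph) m (u : vert G + 'I_m) : ~ add_isolated_adj u u.
Proof. by case: u => [a|a] //=; apply: adj_irrefl. Qed.

Definition add_isolated (G : graph) (m : nat) : graph :=
  Graph _ _ (@add_isolated_adj_sym G m) (@add_isolated_adj_irrefl G m).

Lemma embeds_add_isolated (G : graph) m : embeds G (add_isolated G m).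
Proof. by exists inl; split; [move=> x y []|]. Qed.

Section SelfEmbedding.

Variables (H : graph) (f : vert H -> vert H) (R : vert H -> Prop) (d : vert H).
Hypotheses (f_emb : is_embedding f) (R_closed : forall x y, R x -> adj H x y -> R y)
  (f_in_R : forall x, R (f x)) (d_notin_R : ~ R d).

Lemma iter_separated k j x :
  k < j -> iter j f x <> iter k f d /\ ~ adj H (iter j f x) (iter k f d).
Proof.
move=> lt_kj; have [fk_inj fk_adj] := is_embedding_iter k f_emb.
have -> : iter j f x = iter k f (iter (j - k) f x).
  by rewrite -iterD subnKC // ltnW.
have R_p : R (iter (j - k) f x).
  by rewrite -(prednK (n := j - k)) ?subn_gt0 // iterS; apply: f_in_R.
split; first by move=> /fk_inj eq_pd; apply: d_notin_R; rewrite -eq_pd.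
by move=> adj_pd; apply: d_notin_R; apply: (R_closed R_p); apply/fk_adj.
Qed.

Lemma add_isolated_embeds (G : graph) m : embeds G H -> embeds (add_isolated G m) H.
Proof.
move=> [e [e_inj e_adj]].
have [fm_inj fm_adj] := is_embedding_iter m f_emb.
pose g (u : vert (add_isolated G m)) :=
  match u with inl a => iter m f (e a) | inr k => iter k f d end.
have sep_inl a (k : 'I_m) := iter_separated (e a) (ltn_ord k).
exists g; split.
- case=> [a|k] [b|j] /= eq_g.
  + by rewrite (e_inj _ _ (fm_inj _ _ eq_g)).
  + by case: (sep_inl a j).
  + by case: (sep_inl b k); rewrite eq_g.
  + congr inr; apply: val_inj => /=.
    case: (ltngtP k j) => [lt_kj|lt_jk|//].
    * by case: (iter_separated d lt_kj) => /(_ (esym eq_g)).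
    * by case: (iter_separated d lt_jk) => /(_ eq_g).
- case=> [a|k] [b|j]; rewrite /= /add_isolated_adj; first by rewrite e_adj fm_adj.
  + by split=> // /(proj2 (sep_inl a j)).
  + by split=> // /adj_sym /(proj2 (sep_inl b k)).
  + split=> // adj_kj; case: (ltngtP k j) => [lt_kj|lt_jk|eq_kj].
    * by case: (iter_separated d lt_kj) => _; apply; apply: adj_sym.
    * by case: (iter_separated d lt_jk).
    * by move: adj_kj; rewrite eq_kj; apply: adj_irrefl.
Qed.

End SelfEmbedding.

Lemma equimorphic_add_isolated (G H : graph) m :
  connected G -> equimorphic H G -> ~ connected H -> equimorphic (add_isolated G m) G.
Proof.
move=> [[g0] G_conn] [[h h_emb] [e e_emb]] not_conn.
have [d not_reach_d] := not_connected_unreachable (e g0) not_conn.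
have reach_e x : reach (e g0) (e x).
  by apply: (reach_hom _ (G_conn g0 x)) => u v /(proj2 e_emb u v).
split; last exact: embeds_add_isolated.
apply: (embeds_trans (B := H)); last by exists h.
apply: (add_isolated_embeds (f := e \o h) (R := reach (e g0)) (d := d)); last by exists e.
- exact: is_embedding_comp.
- by move=> x y reach_x xy; apply: (rt_trans _ _ _ x) => //; apply: rt_step.
- move=> x; exact: reach_e.
- exact: not_reach_d.
Qed.

Definition isolated (A : graph) (v : vert A) : Prop := forall w, ~ adj A v w.

Lemma connected_isolated_eq (G : graph) (x y : vert G) :
  connected G -> isolated x -> y = x.
Proof.
move=> [_ G_conn] iso_x.
by case: (clos_rt_rt1n _ _ _ _ (G_conn x y)) => // z w /iso_x.
Qed.

Lemma isomorphic_add_isolated_le (G : graph) n m :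
  connected G -> isomorphic (add_isolated G n) (add_isolated G m) -> n <= m.
Proof.
move=> G_conn [p [q [qpK [pqK p_adj]]]]; have [[g0] _] := G_conn.
have inr_to_inl_trivial (k : 'I_n) a : p (inr k) = inl a -> forall b, b = a.
  move=> pk b; apply: connected_isolated_eq G_conn _ => c ac.
  by have := proj2 (p_adj (inr k) (q (inl c))); rewrite pqK pk => /(_ ac).
(* The extra point [None] covers the case where G is a single, isolated vertex. *)
pose sigma (o : option 'I_n) : vert (add_isolated G n) :=
  if o is Some k then inr k else inl g0.
pose pi (u : vert (add_isolated G m)) : option 'I_m := if u is inr j then Some j else None.
have inl_images_eq o1 o2 a1 a2 :
  p (sigma o1) = inl a1 -> p (sigma o2) = inl a2 -> a1 = a2.
  case: o1 o2 => [k1|] [k2|] /=; try by move=> /inr_to_inl_trivial/(_ a2) ->.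
  - by move=> _ /inr_to_inl_trivial/(_ a1) ->.
  - by move=> -> [].
have pi_p_sigma_inj : injective (pi \o p \o sigma).
  move=> o1 o2 /= eq_pi.
  have eq_p : p (sigma o1) = p (sigma o2).
    move: (inl_images_eq o1 o2) eq_pi; rewrite /pi.
    case: (p (sigma o1)) => [a1|j1]; case: (p (sigma o2)) => [a2|j2] // eq_a.
    - by rewrite (eq_a a1 a2 erefl erefl).
    - by case=> ->.
  by case: o1 o2 eq_p {eq_pi} => [k1|] [k2|] /(can_inj qpK) // [->].
by have := leq_card _ pi_p_sigma_inj; rewrite !card_option !card_ord.
Qed.

Lemma isomorphic_sym (A B : graph) : isomorphic A B -> isomorphic B A.
Proof.
move=> [p [q [qpK [pqK p_adj]]]]; exists q, p; do 2!split=> //.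
by move=> x y; rewrite p_adj !pqK.
Qed.

Theorem lemma1p4 (G : graph) :
  connected G ->
  (exists H : graph, equimorphic H G /\ ~ connected H) ->
  exists F : nat -> graph,
    (forall n, equimorphic (F n) G) /\
    (forall n m, n <> m -> ~ isomorphic (F n) (F m)).
Proof.
move=> G_conn [H [H_equi H_disconn]].
exists (add_isolated G); split=> [n | n m neq_nm iso_nm].
  exact: equimorphic_add_isolated G_conn H_equi H_disconn.
apply/neq_nm/eqP; rewrite eqn_leq.
rewrite (isomorphic_add_isolated_le G_conn iso_nm).
by rewrite (isomorphic_add_isolated_le G_conn (isomorphic_sym iso_nm)).
Qed.
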